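(* Let $G$ be a simple connected graph. Then the following statements are equivalent: (i) $G\in\Gamma_{\leq 1}$, i.e. $\gamma(G)\le 1$; (ii) $G$ is $P_3$-free, i.e. no induced subgraph of $G$ is isomorphic to the path $P_3$ on three vertices; (iii) $G$ is a complete graph.
   Context: For a finite graph $G$ and indeterminates $X_G=\{x_u : u\in V(G)\}$, the generalized Laplacian matrix $L(G,X_G)$ is the $V(G)\times V(G)$ matrix over $\mathbb{Z}[X_G]$ whose $(u,u)$-entry is $x_u$ and whose $(u,v)$-entry for $u\neq v$ is $-m_{uv}$, where $m_{uv}$ is the number of edges between $u$ and $v$. For $1\le i\le |V(G)|$ the $i$-th critical ideal $I_i(G,X_G)$ is the ideal of $\mathbb{Z}[X_G]$ generated by all $i\times i$ minors of $L(G,X_G)$; by convention $I_i(G,X_G)=\langle 1\rangle$ for $i<1$ and $\langle 0\rangle$ for $i>|V(G)|$. The algebraic co-rank $\gamma(G)$ is the number of critical ideals of $G$ equal to $\langle 1\rangle$. $\Gamma_{\le k}$ denotes the set of simple connected graphs $G$ with $\gamma(G)\le k$. *)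

From mathcomp Require Import all_boot all_order all_algebra.
From mathcomp Require Import mpoly.
From Stdlib Require Import ClassicalDescription.
Set Implicit Arguments. Unset Strict Implicit. Unset Printing Implicit Defensive.
Import GRing.Theory.
Local Open Scope ring_scope.

Definition simple_graph (n : nat) (e : rel 'I_n) : Prop :=
  ssrbool.symmetric e /\ ssrbool.irreflexive e.

Definition graph_connected (n : nat) (e : rel 'I_n) : Prop :=
  forall u v : 'I_n, connect e u v.

(* Generalized Laplacian L(G, X_G) over Z[x_0,...,x_{n-1}] (m_uv = 0 or 1). *)
Definition gen_laplacian (n : nat) (e : rel 'I_n) : 'M[{mpoly int[n]}]_n :=
  \matrix_(u, v) (if u == v then 'X_u else - ((e u v : nat)%:R)).

Definition strictly_increasing (n k : nat) (f : {ffun 'I_k -> 'I_n}) : bool :=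
  [forall i : 'I_k, forall j : 'I_k, (i < j)%N ==> (f i < f j)%N].

Definition minor (R : comRingType) (n k : nat) (A : 'M[R]_n)
  (f g : {ffun 'I_k -> 'I_n}) : R :=
  \det (\matrix_(i, j) A (f i) (g j)).

Definition minors_ideal_is_one (R : comRingType) (n k : nat) (A : 'M[R]_n) : Prop :=
  exists c : {ffun ({ffun 'I_k -> 'I_n} * {ffun 'I_k -> 'I_n}) -> R},
    \sum_(p | strictly_increasing p.1 && strictly_increasing p.2)
        c p * minor A p.1 p.2 = 1.

Definition critical_ideal_trivial (n : nat) (e : rel 'I_n) (k : nat) : Prop :=
  minors_ideal_is_one k (gen_laplacian e).

Definition pbool (P : Prop) : bool :=
  if excluded_middle_informative P then true else false.

Definition algebraic_corank (n : nat) (e : rel 'I_n) : nat :=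
  #|[set k : 'I_n | pbool (critical_ideal_trivial e k.+1) ]|.

Definition P3_adj : rel 'I_3 := fun i j => (i.+1 == j :> nat) || (j.+1 == i :> nat).

Definition has_induced_P3 (n : nat) (e : rel 'I_n) : Prop :=
  exists f : 'I_3 -> 'I_n, injective f /\ forall i j, e (f i) (f j) = P3_adj i j.

Definition P3_free (n : nat) (e : rel 'I_n) : Prop := ~ has_induced_P3 e.

Definition complete_graph (n : nat) (e : rel 'I_n) : Prop :=
  forall u v : 'I_n, u != v -> e u v.

From mathcomp Require Import all_boot all_order all_algebra.
From mathcomp Require Import mpoly.
From mathcomp Require Import ring.
From Stdlib Require Import ClassicalDescription.
Set Implicit Arguments. Unset Strict Implicit. Unset Printing Implicit Defensive.
Import GRing.Theory.
Local Open Scope ring_scope.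

(* An induced P_3 u - v - w gives the 1-minor -1 at (u, v) and the 2-minor
   with rows u, v and columns v, w, whose determinant is
   (-1)(-1) - x_v * 0 = 1; so I_1 = I_2 = <1> and gamma >= 2.  Conversely a
   connected P_3-free graph is complete, since adjacency is then transitive
   along paths; and for the complete graph, evaluating every x_u at -1 turns
   L(G, X_G) into the all-(-1) matrix, all of whose minors of order >= 2
   vanish, so I_2 <> <1> and gamma <= 1. *)

Lemma pboolP (P : Prop) : reflect P (pbool P).
Proof. by rewrite /pbool; case: excluded_middle_informative => h; constructor. Qed.

Lemma det_mx22 (R : comNzRingType) (A : 'M[R]_2) :
  \det A = A 0 0 * A 1 1 - A 0 1 * A 1 0.
Proof.
rewrite (expand_det_row _ 0) !big_ord_recl big_ord0 /cofactor !det_mx11 /=.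
rewrite addr0 !mxE /= expr0 expr1 !mul1r mulN1r mulrN.
by congr (A _ _ * A _ _ - A _ _ * A _ _); apply: val_inj.
Qed.

Section MinorsIdeal.

Variables (R : comNzRingType) (n : nat) (A : 'M[R]_n).

Lemma minors_ideal_is_one_unit k (f g : {ffun 'I_k -> 'I_n}) u :
  strictly_increasing f -> strictly_increasing g -> u * minor A f g = 1 ->
  minors_ideal_is_one k A.
Proof.
move=> incf incg hu; exists [ffun p => if p == (f, g) then u else 0].
rewrite (bigD1 (f, g)) /=; last by rewrite incf incg.
rewrite ffunE eqxx big1 ?addr0 // => p /andP [_ /negbTE p_neq].
by rewrite ffunE p_neq mul0r.
Qed.

Definition index1 (a : 'I_n) : {ffun 'I_1 -> 'I_n} := [ffun => a].

Definition index2 (a b : 'I_n) : {ffun 'I_2 -> 'I_n} :=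
  [ffun i : 'I_2 => if val i == 0%N then a else b].

Lemma index1_incr (a : 'I_n) : strictly_increasing (index1 a).
Proof. by apply/'forall_forallP => -[[|//] ?] [[|//] ?]. Qed.

Lemma index2_incr (a b : 'I_n) : (a < b)%N -> strictly_increasing (index2 a b).
Proof.
move=> lt_ab; apply/'forall_forallP => i j; apply/implyP; rewrite !ffunE.
by case: i => -[|[|//]] ?; case: j => -[|[|//]] ?.
Qed.

Lemma minor_index2 (a b c d : 'I_n) :
  minor A (index2 a b) (index2 c d) = A a c * A b d - A a d * A b c.
Proof. by rewrite /minor det_mx22 !mxE !ffunE. Qed.

Lemma minors_ideal_is_one_1 a b u : u * A a b = 1 -> minors_ideal_is_one 1 A.
Proof.
move=> hu; apply: (minors_ideal_is_one_unit (index1_incr a) (index1_incr b)).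
by rewrite /minor det_mx11 !mxE !ffunE; exact: hu.
Qed.

Lemma minors_ideal_is_one_2 r1 r2 c1 c2 u :
  r1 != r2 -> c1 != c2 ->
  u * (A r1 c1 * A r2 c2 - A r1 c2 * A r2 c1) = 1 ->
  minors_ideal_is_one 2 A.
Proof.
wlog lt_r : r1 r2 u / (r1 < r2)%N.
  move=> W r12 c12 hu.
  case: (ltngtP r1 r2) => [lt_r|lt_r|/val_inj/eqP]; first exact: (W r1 r2 u).
    apply: (W r2 r1 (- u) lt_r); [by rewrite eq_sym | by [] | by rewrite -hu; ring].
  by rewrite (negbTE r12).
wlog lt_c : c1 c2 u / (c1 < c2)%N.
  move=> W r12 c12 hu.
  case: (ltngtP c1 c2) => [lt_c|lt_c|/val_inj/eqP]; first exact: (W c1 c2 u).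
    apply: (W c2 c1 (- u) lt_c); [by [] | by rewrite eq_sym | by rewrite -hu; ring].
  by rewrite (negbTE c12).
move=> _ _ hu.
apply: (minors_ideal_is_one_unit (index2_incr lt_r) (index2_incr lt_c) (u := u)).
by rewrite minor_index2.
Qed.

End MinorsIdeal.

Section P3.

Variables (n : nat) (e : rel 'I_n).

Definition path3 (x y z : 'I_n) (i : 'I_3) : 'I_n :=
  if val i == 0%N then x else if val i == 1%N then y else z.

Lemma induced_P3_path3 x y z :
  simple_graph e -> x != y -> y != z -> x != z ->
  e x y -> e y z -> ~~ e x z -> has_induced_P3 e.
Proof.
move=> [sym_e irr_e] xy yz xz exy eyz exz; exists (path3 x y z); split.
  move=> i j; rewrite /path3.
  case: i => -[|[|[|//]]] ?; case: j => -[|[|[|//]]] ? //= h; try exact: val_inj;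
    by move: xy yz xz; rewrite ?h eqxx.
move=> i j; rewrite /path3 /P3_adj.
case: i => -[|[|[|//]]] ?; case: j => -[|[|[|//]]] ? //=;
  by rewrite ?irr_e ?(sym_e y x) ?(sym_e z y) ?(sym_e z x) ?exy ?eyz ?(negbTE exz).
Qed.

Lemma P3_free_adj_trans x y z :
  simple_graph e -> P3_free e -> x != z -> e x y -> e y z -> e x z.
Proof.
move=> se free xz exy eyz; apply/negPn/negP => nexz; apply: free.
have xy : x != y by apply: contraTneq exy => <-; rewrite se.2.
have yz : y != z by apply: contraTneq eyz => <-; rewrite se.2.
exact: (induced_P3_path3 se xy yz xz exy eyz nexz).
Qed.

Lemma P3_free_connect : simple_graph e -> P3_free e ->
  forall u v, connect e u v -> (u == v) || e u v.
Proof.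
move=> se free u v /connectP [p + ->] {v}; elim: p u => [|w p IH] u /=.
  by rewrite eqxx.
case/andP=> euw /IH /orP [/eqP <-|ewv]; first by rewrite euw orbT.
have [//|uv] := eqVneq u (last w p).
by rewrite (P3_free_adj_trans se free uv euw ewv) orbT.
Qed.

Lemma P3_free_complete :
  simple_graph e -> graph_connected e -> P3_free e -> complete_graph e.
Proof.
move=> se conn free u v uv.
by have := P3_free_connect se free (conn u v); rewrite (negbTE uv).
Qed.

Lemma complete_P3_free : complete_graph e -> P3_free e.
Proof.
move=> complete [f [inj_f adj_f]].
have ends : f 0 != f 2 by apply: contraTneq isT => /inj_f.
by have := complete _ _ ends; rewrite adj_f.
Qed.

End P3.

Lemma complete_critical_ideal_nontrivial n (e : rel 'I_n) k :
  complete_graph e -> ~ critical_ideal_trivial e k.+2.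
Proof.
move=> complete [c sum_c].
pose all_minus1 (_ : 'I_n) : int := -1.
have L_minus1 u v :
    meval all_minus1 (if u == v then 'X_u else - ((e u v : nat)%:R)) = -1.
  have [_|uv] := eqVneq u v; first by rewrite mevalXU.
  by rewrite complete // mevalN mevalC.
have := congr1 (meval all_minus1) sum_c; rewrite rmorph1 rmorph_sum /= big1 //.
move=> p _; rewrite rmorphM /= /minor -det_map_mx.
rewrite (@determinant_alternate _ _ _ (0 : 'I_k.+2) 1) ?mulr0 // => j.
by rewrite !mxE; exact: etrans (L_minus1 _ _) (esym (L_minus1 _ _)).
Qed.

Lemma complete_corank_le1 n (e : rel 'I_n) :
  complete_graph e -> (algebraic_corank e <= 1)%N.
Proof.
move=> complete; apply/card_le1_eqP => i j; rewrite !inE.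
have trivial_at0 (k : 'I_n) : pbool (critical_ideal_trivial e k.+1) -> val k = 0%N.
  by case: k => -[|k] ? //= /pboolP /(complete_critical_ideal_nontrivial complete).
by move=> /trivial_at0 i0 /trivial_at0 j0; apply: val_inj; rewrite i0 j0.
Qed.

Lemma induced_P3_corank_gt1 n (e : rel 'I_n) :
  has_induced_P3 e -> (1 < algebraic_corank e)%N.
Proof.
move=> [f [inj_f adj_f]].
have n_ge3 : (3 <= n)%N by have := leq_card f inj_f; rewrite !card_ord.
pose u := f 0; pose v := f 1; pose w := f 2.
have [euv evw euw] : [/\ e u v, e v w & e u w = false] by rewrite !adj_f.
have neq (i j : 'I_3) : i != j -> f i != f j.
  by apply: contraNneq => /inj_f ->.
have [uv vw uw] : [/\ u != v, v != w & u != w] by split; apply: neq.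
have I1 : critical_ideal_trivial e 1.
  apply: (@minors_ideal_is_one_1 _ _ _ u v (-1)).
  by rewrite mxE (negbTE uv) euv mulrNN mul1r.
have I2 : critical_ideal_trivial e 2.
  apply: (@minors_ideal_is_one_2 _ _ _ u v v w 1 uv vw).
  rewrite !mxE (negbTE uv) (negbTE vw) (negbTE uw) euv evw euw /=.
  by rewrite mulrNN !mul1r oppr0 mul0r subr0.
have n_gt0 : (0 < n)%N by apply: leq_trans n_ge3.
have n_gt1 : (1 < n)%N by apply: leq_trans n_ge3.
have trivial_01 : [set Ordinal n_gt0; Ordinal n_gt1] \subset
    [set k : 'I_n | pbool (critical_ideal_trivial e k.+1)].
  by apply/subsetP => k; rewrite !inE => /orP [] /eqP ->; apply/pboolP.
have := subset_leq_card trivial_01; rewrite cards2.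
by have -> : (Ordinal n_gt0 != Ordinal n_gt1) by apply/eqP => /(congr1 val).
Qed.

Theorem theorem3p3 (n : nat) (e : rel 'I_n) :
  simple_graph e -> graph_connected e ->
  ((algebraic_corank e <= 1)%N <-> P3_free e) /\
  (P3_free e <-> complete_graph e).
Proof.
move=> se conn; split; split.
- by move=> le1 /induced_P3_corank_gt1; rewrite ltnNge le1.
- by move=> free; apply/complete_corank_le1/(P3_free_complete se conn free).
- exact: P3_free_complete se conn.
- exact: complete_P3_free.
Qed.
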